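(* Let $0<m<1$, $\mu>0$, let $f:\mathbb{R}\to\mathbb{R}$ be smooth, and let $u_->u_+=0$. For $s\in\mathbb{R}$ put $g(u)=-s(u-u_-)+f(u)-f(u_-)$. (1) (Necessary condition.) If the equation $u_t+f(u)_x=\mu (u^m)_{xx}$ admits a monotonically decreasing shock profile $u(x,t)=U(x-st)$ connecting $u_-$ and $u_+$, i.e. $U$ is monotonically decreasing, solves $-sU_\xi+f(U)_\xi=\mu (U^m)_{\xi\xi}$ and satisfies $U(\xi)\to u_\pm$ as $\xi\to\pm\infty$, then $u_\pm$ and $s$ satisfy the Rankine–Hugoniot condition $$s=\frac{f(u_+)-f(u_-)}{u_+-u_-}$$ and the generalized shock condition $g(u)<0$ for all $u\in(u_+,u_-)$. (2) (Sufficient condition.) If $s$ satisfies the Rankine–Hugoniot condition above and $g(u)<0$ for all $u\in(u_+,u_-)$, then there exists a monotonically decreasing solution $U(\xi)$ of $-sU_\xi+f(U)_\xi=\mu (U^m)_{\xi\xi}$ with $U(\pm\infty)=u_\pm$, and it is unique up to a shift in $\xi$. (3) (Decay properties.) In the non-degenerate case $f'(u_+)<s<f'(u_-)$ this profile satisfies $$|U_\xi|^{\frac{1}{2-m}}\sim |U(\xi)-u_+|\sim |\xi|^{-\frac{1}{1-m}}\ \text{ as }\xi\to+\infty,\qquad |U_\xi|\sim |U(\xi)-u_-|\sim e^{-\lambda|\xi|}\ \text{ as }\xi\to-\infty,$$ where $\lambda:=\frac{u_-^{1-m}}{\mu m}\big(f'(u_-)-s\big)>0$. In the degenerate case $f'(u_+)=s<f'(u_-)$,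 assuming moreover that $f''(u_+)=\cdots=f^{(k_+)}(u_+)=0$ and $f^{(k_++1)}(u_+)\neq 0$ for some integer $k_+\ge 1$, it satisfies $$|U_\xi|^{\frac{1}{k_++2-m}}\sim |U(\xi)-u_+|\sim |\xi|^{-\frac{1}{k_++1-m}}\ \text{ as }\xi\to+\infty,\qquad |U_\xi|\sim |U(\xi)-u_-|\sim e^{-\lambda|\xi|}\ \text{ as }\xi\to-\infty,$$ with the same $\lambda$.
   Context: For positive functions, $a(\xi)\sim b(\xi)$ as $\xi\to\xi_0$ means there is a constant $C\ge 1$ with $C^{-1}b\le a\le Cb$ in a neighborhood of $\xi_0$. Note that under the Rankine–Hugoniot condition $g(u)$ also equals $-s(u-u_+)+f(u)-f(u_+)$. *)

From Stdlib Require Import Reals.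
From Coquelicot Require Export Coquelicot.
Open Scope R_scope.

(* x ^ a for real exponent a > 0, with the convention 0 ^ a = 0
   (Stdlib's Rpower 0 a would be exp (a * ln 0) = 1, which is wrong). *)
Definition rpow (x a : R) : R := if Rlt_dec 0 x then Rpower x a else 0.

Definition smooth (f : R -> R) : Prop := forall (n : nat) (x : R), ex_derive_n f n x.

Definition gfun (f : R -> R) (s um u : R) : R := - s * (u - um) + f u - f um.

Definition is_profile (f : R -> R) (mu m s um : R) (U : R -> R) : Prop :=
  (forall x y, x <= y -> U y <= U x) /\
  is_lim U m_infty (Finite um) /\
  is_lim U p_infty (Finite 0) /\
  (forall xi,
     ex_derive U xi /\
     ex_derive (fun x => rpow (U x) m) xi /\
     ex_derive (Derive (fun x => rpow (U x) m)) xi /\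
     - s * Derive U xi + Derive (fun x => f (U x)) xi
       = mu * Derive (Derive (fun x => rpow (U x) m)) xi).

Definition equiv_pinfty (a b : R -> R) : Prop :=
  exists C X : R, 1 <= C /\
    forall x, X < x -> b x / C <= a x /\ a x <= C * b x.

Definition equiv_minfty (a b : R -> R) : Prop :=
  exists C X : R, 1 <= C /\
    forall x, x < X -> b x / C <= a x /\ a x <= C * b x.

From Stdlib Require Import Reals Ranalysis5 Lra Lia ClassicalEpsilon.
From Coquelicot Require Import Coquelicot.
Open Scope R_scope.

(* Integrating the profile equation once gives [mu (U^m)' = g(U)]; the integration constant is
   pinned down at both ends because a bounded function cannot have a derivative with a nonzero
   limit at infinity, and this is the Rankine-Hugoniot condition.  Since [U] decreases, [g <= 0] on
   its range.  Writing [U' = h(U)] with [h(u) = g(u) u^(1-m) / (mu m)], which is Lipschitz at every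
   zero of [g], a Gronwall argument shows that [U] can neither reach nor leave a zero of [g]; hence
   [0 < U < u_-] and [g < 0] on [(0, u_-)].
   Conversely, [Phi(u) = int du / h(u)] is strictly decreasing on [(0, u_-)] and diverges
   logarithmically at both ends, where [h] vanishes linearly; its inverse is a profile, and
   [Phi (U xi) - xi] is constant along every profile, which gives uniqueness up to shifts.
   Near [0], Taylor's formula gives [g(u) ~ -u^N] with [N = 1] or [N = k_+ + 1], so that
   [(U^(m-N))'] stays between two positive constants; near [u_-],
   [h(u) = -lambda (u_- - u) + O((u_- - u)^2)] yields exponential convergence at rate [lambda]. *)

(** * Calculus on the real line *)

Lemma is_derive_continuity_pt (F : R -> R) x d : is_derive F x d -> continuity_pt F x.
Proof. intros H. apply continuity_pt_filterlim. apply (ex_derive_continuous F). now exists d. Qed.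

Lemma MVT_interval (F dF : R -> R) a b : a <= b ->
  (forall x, a <= x <= b -> is_derive F x (dF x)) ->
  exists c, a <= c <= b /\ F b - F a = dF c * (b - a).
Proof.
  intros Hab HD.
  assert (Hmin : Rmin a b = a) by (apply Rmin_left; lra).
  assert (Hmax : Rmax a b = b) by (apply Rmax_right; lra).
  destruct (MVT_gen F a b dF) as [c [Hc E]]; simpl in *; rewrite ?Hmin, ?Hmax in *.
  - intros x Hx. apply HD. lra.
  - intros x Hx. apply (is_derive_continuity_pt F x (dF x)), HD, Hx.
  - now exists c.
Qed.

Lemma is_derive_ge0_nondecr (F dF : R -> R) a b : a <= b ->
  (forall x, a <= x <= b -> is_derive F x (dF x)) ->
  (forall x, a <= x <= b -> 0 <= dF x) -> F a <= F b.
Proof.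
  intros Hab HD Hp. destruct (MVT_interval F dF a b Hab HD) as [c [Hc E]].
  specialize (Hp c Hc). nra.
Qed.

Lemma is_derive_le0_nonincr (F dF : R -> R) a b : a <= b ->
  (forall x, a <= x <= b -> is_derive F x (dF x)) ->
  (forall x, a <= x <= b -> dF x <= 0) -> F b <= F a.
Proof.
  intros Hab HD Hn. destruct (MVT_interval F dF a b Hab HD) as [c [Hc E]].
  specialize (Hn c Hc). nra.
Qed.

Lemma is_derive_lt0_decr (F dF : R -> R) a b : a < b ->
  (forall x, a <= x <= b -> is_derive F x (dF x)) ->
  (forall x, a <= x <= b -> dF x < 0) -> F b < F a.
Proof.
  intros Hab HD Hn. destruct (MVT_interval F dF a b (Rlt_le _ _ Hab) HD) as [c [Hc E]].
  specialize (Hn c Hc). nra.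
Qed.

Lemma is_derive_0_const (F : R -> R) : (forall x, is_derive F x 0) -> forall x y, F x = F y.
Proof.
  intros HD x y.
  destruct (Rle_lt_dec x y) as [Hxy|Hxy];
    [ destruct (MVT_interval F (fun _ => 0) x y Hxy (fun t _ => HD t)) as [c [_ E]]
    | destruct (MVT_interval F (fun _ => 0) y x (Rlt_le _ _ Hxy) (fun t _ => HD t)) as [c [_ E]] ];
    lra.
Qed.

Lemma is_derive_loc_lipschitz (F : R -> R) x0 d : is_derive F x0 d ->
  exists del, 0 < del /\ forall v, Rabs (v - x0) < del ->
    Rabs (F v - F x0) <= (Rabs d + 1) * Rabs (v - x0).
Proof.
  intros HD. apply is_derive_Reals in HD.
  destruct (HD 1 Rlt_0_1) as [del Hdel].
  exists del. split; [apply cond_pos|]. intros v Hv.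
  destruct (Req_dec v x0) as [->|Hne].
  { rewrite !Rminus_diag, Rabs_R0. lra. }
  specialize (Hdel (v - x0)). replace (x0 + (v - x0)) with v in Hdel by ring.
  assert (Hpos : 0 < Rabs (v - x0)) by (apply Rabs_pos_lt; lra).
  specialize (Hdel ltac:(lra) Hv).
  replace (F v - F x0) with (((F v - F x0) / (v - x0) - d) * (v - x0) + d * (v - x0))
    by (field; lra).
  eapply Rle_trans; [apply Rabs_triang|]. rewrite !Rabs_mult. nra.
Qed.

Lemma taylor1_remainder (F dF : R -> R) a d2 : (forall x, is_derive F x (dF x)) ->
  is_derive dF a d2 -> exists del K, 0 < del /\ 0 <= K /\
    forall u, Rabs (u - a) < del -> Rabs (F u - F a - dF a * (u - a)) <= K * (u - a) ^ 2.
Proof.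
  intros HF Hd2. destruct (is_derive_loc_lipschitz dF a d2 Hd2) as [del [Hdel Hb]].
  exists del, (Rabs d2 + 1). split; [exact Hdel|]. split; [generalize (Rabs_pos d2); lra|].
  intros u Hu.
  assert (Hz : exists z, Rabs (z - a) <= Rabs (u - a) /\ F u - F a = dF z * (u - a)).
  { destruct (Rle_lt_dec a u) as [Hau|Hua].
    - destruct (MVT_interval F dF a u Hau (fun x _ => HF x)) as [z [Hz E]].
      exists z. split; [rewrite !Rabs_pos_eq by lra; lra | exact E].
    - destruct (MVT_interval F dF u a (Rlt_le _ _ Hua) (fun x _ => HF x)) as [z [Hz E]].
      exists z. split; [rewrite !Rabs_left1 by lra; lra | nra]. }
  destruct Hz as [z [Hz E]].
  replace (F u - F a - dF a * (u - a)) with ((dF z - dF a) * (u - a)) by (rewrite E; ring).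
  rewrite Rabs_mult, <- (Rabs_pos_eq ((u - a) ^ 2)), <- RPow_abs by apply pow2_ge_0.
  specialize (Hb z ltac:(lra)).
  assert (Hza : (Rabs d2 + 1) * Rabs (z - a) <= (Rabs d2 + 1) * Rabs (u - a))
    by (apply Rmult_le_compat_l; [generalize (Rabs_pos d2); lra | exact Hz]).
  simpl. rewrite Rmult_1_r, <- Rmult_assoc.
  apply Rmult_le_compat_r; [apply Rabs_pos | lra].
Qed.

Lemma is_derive_le0_of_decr (V : R -> R) x d : is_derive V x d ->
  (forall y, x <= y -> V y <= V x) -> d <= 0.
Proof.
  intros HD HM. apply is_derive_Reals in HD.
  destruct (Rle_lt_dec d 0) as [|Hd]; auto.
  destruct (HD (d / 2)) as [del Hdel]; [lra|].
  pose proof (cond_pos del) as Hdel0.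
  specialize (Hdel (del / 2) ltac:(lra) ltac:(rewrite Rabs_pos_eq; lra)).
  assert (Hq : (V (x + del / 2) - V x) / (del / 2) <= 0).
  { apply Rmult_le_0_r; [generalize (HM (x + del / 2)); lra|].
    left. apply Rinv_0_lt_compat. lra. }
  apply Rabs_def2 in Hdel. lra.
Qed.

Lemma is_derive_0_at_min (V : R -> R) x d : is_derive V x d ->
  (forall y, V x <= V y) -> d = 0.
Proof.
  intros HD HM. apply is_derive_Reals in HD.
  change d with (derive_pt V x (exist _ d HD)).
  apply (deriv_minimum V (x - 1) (x + 1)); auto; lra.
Qed.

Lemma exp_le_compat x y : x <= y -> exp x <= exp y.
Proof. intros [H | ->]; [apply Rlt_le, exp_increasing, H | apply Rle_refl]. Qed.

Lemma is_derive_mult_exp (w : R -> R) k x d : is_derive w x d ->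
  is_derive (fun t => w t * exp (k * t)) x ((d + k * w x) * exp (k * x)).
Proof.
  intros Hw.
  assert (He : is_derive (fun t => exp (k * t)) x (k * exp (k * x))) by (auto_derive; [auto | ring]).
  pose proof (is_derive_mult w (fun t => exp (k * t)) x d _ Hw He Rmult_comm) as Hm.
  unfold plus, mult in Hm; simpl in Hm. unfold plus, mult in Hm; simpl in Hm.
  replace ((d + k * w x) * exp (k * x)) with (d * exp (k * x) + w x * (k * exp (k * x))) by ring.
  exact Hm.
Qed.

Lemma continuity_pt_inverse_decr (P U : R -> R) a b x :
  (forall u v, a < u -> u < v -> v < b -> P v < P u) ->
  (forall y, a < U y < b /\ P (U y) = y) -> continuity_pt U x.
Proof.
  intros HP HU e He.
  destruct (HU x) as [Hu Eu]. set (u := U x) in *.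
  set (e' := Rmin e (Rmin (u - a) (b - u)) / 2).
  assert (He' : 0 < e' /\ e' < e /\ e' < u - a /\ e' < b - u).
  { unfold e'. generalize (Rmin_l e (Rmin (u - a) (b - u))) (Rmin_r e (Rmin (u - a) (b - u)))
      (Rmin_l (u - a) (b - u)) (Rmin_r (u - a) (b - u)).
    assert (0 < Rmin e (Rmin (u - a) (b - u))) by (repeat apply Rmin_pos; lra). lra. }
  assert (H1 : x < P (u - e')) by (rewrite <- Eu; apply HP; lra).
  assert (H2 : P (u + e') < x) by (rewrite <- Eu; apply HP; lra).
  set (alp := Rmin (P (u - e') - x) (x - P (u + e'))).
  assert (Halp : 0 < alp /\ alp <= P (u - e') - x /\ alp <= x - P (u + e')).
  { unfold alp. split; [apply Rmin_pos; lra | split; [apply Rmin_l | apply Rmin_r]]. }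
  exists alp. split; [lra|]. intros y [_ Hy]. simpl in *. unfold R_dist in *.
  apply Rabs_def2 in Hy. destruct (HU y) as [Huy Ey].
  assert (U y < u + e').
  { destruct (Rlt_le_dec (U y) (u + e')) as [|Hge]; auto.
    destruct (Req_dec (U y) (u + e')) as [E|Hne]; [rewrite E in Ey; lra|].
    assert (P (U y) < P (u + e')) by (apply HP; lra). lra. }
  assert (u - e' < U y).
  { destruct (Rlt_le_dec (u - e') (U y)) as [|Hle]; auto.
    destruct (Req_dec (U y) (u - e')) as [E|Hne]; [rewrite E in Ey; lra|].
    assert (P (u - e') < P (U y)) by (apply HP; lra). lra. }
  apply Rabs_def1; lra.
Qed.

Lemma is_derive_inverse (P U : R -> R) x d :
  (forall y, P (U y) = y) -> continuity_pt U x ->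
  is_derive P (U x) d -> d <> 0 -> is_derive U x (/ d).
Proof.
  intros Hinv Hc HD Hd. apply is_derive_Reals. apply is_derive_Reals in HD.
  intros eps Heps.
  assert (Had : 0 < Rabs d) by (apply Rabs_pos_lt; auto).
  set (e' := Rmin (Rabs d / 2) (eps * Rabs d * Rabs d / 2)).
  assert (He' : 0 < e').
  { unfold e'. apply Rmin_pos; [lra|]. assert (0 < eps * Rabs d * Rabs d) by (repeat apply Rmult_lt_0_compat; auto). lra. }
  destruct (HD e' He') as [d1 Hd1].
  destruct (Hc d1 (cond_pos d1)) as [a [Ha Hca]].
  exists (mkposreal a Ha). intros h Hh0 Hh. simpl in Hh.
  set (k := U (x + h) - U x).
  assert (Hk : k <> 0).
  { unfold k. intros Hk. assert (E : P (U (x + h)) = P (U x)) by (f_equal; lra). rewrite !Hinv in E. lra. }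
  assert (Hk2 : Rabs k < d1).
  { apply (Hca (x + h)). split; [split; [exact I | lra] |].
    simpl. unfold R_dist. replace (x + h - x) with h by ring. exact Hh. }
  specialize (Hd1 k Hk Hk2).
  replace (U x + k) with (U (x + h)) in Hd1 by (unfold k; ring).
  rewrite !Hinv in Hd1. replace (x + h - x) with h in Hd1 by ring.
  (* [r] is the difference quotient of [P] between [U x] and [U (x + h)]. *)
  set (r := h / k) in *.
  assert (Hr1 : Rabs (r - d) < Rabs d / 2) by (eapply Rlt_le_trans; [apply Hd1 | apply Rmin_l]).
  assert (Hr2 : Rabs (r - d) < eps * Rabs d * Rabs d / 2) by (eapply Rlt_le_trans; [apply Hd1 | apply Rmin_r]).
  assert (Hr : Rabs d / 2 < Rabs r).
  { assert (Rabs d <= Rabs r + Rabs (r - d)).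
    { replace d with (r - (r - d)) at 1 by ring. eapply Rle_trans; [apply Rabs_triang|]. rewrite Rabs_Ropp. lra. }
    lra. }
  assert (Hr0 : r <> 0) by (intros E; rewrite E, Rabs_R0 in Hr; lra).
  replace (k / h - / d) with ((d - r) / (r * d)) by (unfold r; field; repeat split; auto).
  unfold Rdiv. rewrite Rabs_mult, Rabs_inv, Rabs_mult, <- Rabs_Ropp.
  replace (- (d - r)) with (r - d) by ring.
  apply (Rmult_lt_reg_r (Rabs r * Rabs d)); [apply Rmult_lt_0_compat; lra|].
  rewrite Rmult_assoc, Rinv_l, Rmult_1_r by (apply Rgt_not_eq, Rmult_lt_0_compat; lra).
  assert (Rabs d * Rabs d / 2 <= Rabs r * Rabs d) by nra.
  nra.
Qed.

(** * Powers with real exponent *)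

Lemma rpow_pos x a : 0 < x -> rpow x a = Rpower x a.
Proof. intros H. unfold rpow. destruct (Rlt_dec 0 x); [reflexivity | lra]. Qed.

Lemma rpow_nonpos x a : x <= 0 -> rpow x a = 0.
Proof. intros H. unfold rpow. destruct (Rlt_dec 0 x); [lra | reflexivity]. Qed.

Lemma rpow_gt0 x a : 0 < x -> 0 < rpow x a.
Proof. intros H. rewrite rpow_pos by exact H. apply exp_pos. Qed.

Lemma rpow_ge0 x a : 0 <= rpow x a.
Proof.
  destruct (Rlt_le_dec 0 x) as [H|H];
    [apply Rlt_le, rpow_gt0, H | rewrite rpow_nonpos by exact H; lra].
Qed.

Lemma rpow_le_compat_l x y a : 0 <= x <= y -> 0 <= a -> rpow x a <= rpow y a.
Proof.
  intros Hxy Ha. destruct (Req_dec x 0) as [->|Hx].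
  - rewrite rpow_nonpos by lra. apply rpow_ge0.
  - rewrite !rpow_pos by lra. apply Rle_Rpower_l; lra.
Qed.

Lemma rpow_opp_le_compat_l x y a : 0 < x <= y -> 0 <= a -> rpow y (- a) <= rpow x (- a).
Proof.
  intros Hxy Ha. rewrite !rpow_pos, !Rpower_Ropp by lra.
  apply Rinv_le_contravar; [apply exp_pos | apply Rle_Rpower_l; lra].
Qed.

Lemma rpow_le_1_plus_abs x a : 0 <= a <= 1 -> rpow x a <= 1 + Rabs x.
Proof.
  intros Ha. destruct (Rlt_le_dec 0 x) as [Hx|Hx].
  2: { rewrite rpow_nonpos by exact Hx. generalize (Rabs_pos x). lra. }
  rewrite rpow_pos, Rabs_pos_eq by lra.
  destruct (Rle_lt_dec x 1) as [H1|H1].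
  - assert (H : Rpower x a <= Rpower 1 a) by (apply Rle_Rpower_l; lra).
    unfold Rpower at 2 in H. rewrite ln_1, Rmult_0_r, exp_0 in H. lra.
  - assert (Rpower x a <= Rpower x 1) by (apply Rle_Rpower; lra).
    rewrite Rpower_1 in *; lra.
Qed.

Lemma rpow_plus x a b : 0 < x -> rpow x (a + b) = rpow x a * rpow x b.
Proof. intros. rewrite !rpow_pos by auto. apply Rpower_plus. Qed.

Lemma rpow_0 x : 0 < x -> rpow x 0 = 1.
Proof. intros. rewrite rpow_pos by auto. apply Rpower_O; auto. Qed.

Lemma rpow_1 x : 0 < x -> rpow x 1 = x.
Proof. intros. rewrite rpow_pos by auto. apply Rpower_1; auto. Qed.

Lemma rpow_pow x N : 0 < x -> rpow x (INR N) = x ^ N.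
Proof. intros. rewrite rpow_pos by auto. apply Rpower_pow; auto. Qed.

Lemma rpow_mult_distr x y a : 0 < x -> 0 < y -> rpow (x * y) a = rpow x a * rpow y a.
Proof.
  intros. rewrite !rpow_pos by (auto; apply Rmult_lt_0_compat; auto).
  symmetry. apply Rpower_mult_distr; auto.
Qed.

Lemma rpow_rpow x a b : 0 < x -> rpow (rpow x a) b = rpow x (a * b).
Proof.
  intros. rewrite (rpow_pos x a), (rpow_pos x (a * b)), rpow_pos by (auto; apply exp_pos).
  apply Rpower_mult.
Qed.

Lemma is_derive_rpow x a : 0 < x -> is_derive (fun y => rpow y a) x (a * rpow x (a - 1)).
Proof.
  intros Hx. rewrite (rpow_pos x (a - 1)) by auto.
  apply (is_derive_ext_loc (fun y => Rpower y a)).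
  - apply (filter_imp (fun y => 0 < y)); [intros y Hy; rewrite rpow_pos; auto | apply (open_gt 0), Hx].
  - apply is_derive_Reals, derivable_pt_lim_power, Hx.
Qed.

Lemma is_derive_rpow_comp (U : R -> R) t d a : is_derive U t d -> 0 < U t ->
  is_derive (fun y => rpow (U y) a) t (a * rpow (U t) (a - 1) * d).
Proof.
  intros HU Hp. replace (a * rpow (U t) (a - 1) * d) with (scal d (a * rpow (U t) (a - 1)))
    by (unfold scal; simpl; unfold mult; simpl; ring).
  apply (is_derive_comp (fun y => rpow y a) U); [apply is_derive_rpow |]; auto.
Qed.

(** * Limits at infinity *)

Lemma is_lim_m_infty_elim (F : R -> R) (l : R) : is_lim F m_infty l ->
  forall eps, 0 < eps -> exists M, forall x, x < M -> Rabs (F x - l) < eps.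
Proof. intros H eps Heps. apply is_lim_spec in H. exact (H (mkposreal eps Heps)). Qed.

Lemma is_lim_p_infty_elim (F : R -> R) (l : R) : is_lim F p_infty l ->
  forall eps, 0 < eps -> exists M, forall x, M < x -> Rabs (F x - l) < eps.
Proof. intros H eps Heps. apply is_lim_spec in H. exact (H (mkposreal eps Heps)). Qed.

Lemma decr_between_lims (U : R -> R) (a b : R) : (forall x y, x <= y -> U y <= U x) ->
  is_lim U m_infty a -> is_lim U p_infty b -> forall x, b <= U x <= a.
Proof.
  intros Hdec Ha Hb x. split.
  - destruct (Rle_lt_dec b (U x)) as [|Hx]; auto.
    destruct (is_lim_p_infty_elim U b Hb (b - U x)) as [M HM]; [lra|].
    generalize (HM (Rmax M x + 1) ltac:(generalize (Rmax_l M x); lra))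
      (Hdec x (Rmax M x + 1) ltac:(generalize (Rmax_r M x); lra)).
    intros H. apply Rabs_def2 in H. lra.
  - destruct (Rle_lt_dec (U x) a) as [|Hx]; auto.
    destruct (is_lim_m_infty_elim U a Ha (U x - a)) as [M HM]; [lra|].
    generalize (HM (Rmin M x - 1) ltac:(generalize (Rmin_l M x); lra))
      (Hdec (Rmin M x - 1) x ltac:(generalize (Rmin_r M x); lra)).
    intros H. apply Rabs_def2 in H. lra.
Qed.

Lemma IVT_lim (U : R -> R) (a b v : R) : (forall x, continuity_pt U x) ->
  is_lim U m_infty a -> is_lim U p_infty b -> b < v < a -> exists x, U x = v.
Proof.
  intros Hc Ha Hb Hv.
  destruct (is_lim_m_infty_elim U a Ha (a - v)) as [M1 HM1]; [lra|].
  destruct (is_lim_p_infty_elim U b Hb (v - b)) as [M2 HM2]; [lra|].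
  set (x1 := M1 - 1). set (x2 := Rmax M2 x1 + 1).
  assert (H1 : v < U x1) by (generalize (HM1 x1 ltac:(unfold x1; lra)); intros H; apply Rabs_def2 in H; lra).
  assert (Hx : M2 < x2 /\ x1 < x2) by (unfold x2; generalize (Rmax_l M2 x1) (Rmax_r M2 x1); lra).
  assert (H2 : U x2 < v) by (generalize (HM2 x2 (proj1 Hx)); intros H; apply Rabs_def2 in H; lra).
  destruct (IVT_interv (fun t => v - U t) x1 x2) as [z [_ Hz]]; try lra.
  - intros t _. apply continuity_pt_minus; [apply continuity_pt_const; now intros ? ? | apply Hc].
  - exists z. lra.
Qed.

Lemma MVT_bounded (V dV : R -> R) B a b : a < b ->
  (forall x, is_derive V x (dV x)) -> (forall x, Rabs (V x) <= B) ->
  exists c, a <= c <= b /\ Rabs (dV c) * (b - a) <= 2 * B.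
Proof.
  intros Hab HD HB.
  destruct (MVT_interval V dV a b (Rlt_le _ _ Hab) (fun x _ => HD x)) as [c [Hc E]].
  exists c. split; [exact Hc|].
  rewrite <- (Rabs_pos_eq (b - a)) by lra. rewrite <- Rabs_mult, <- E.
  eapply Rle_trans; [apply Rabs_triang|]. rewrite Rabs_Ropp.
  generalize (HB a) (HB b). lra.
Qed.

(* Otherwise [V] would change by more than [2 B] over a long enough interval. *)
Lemma bounded_is_derive_lim_m_infty (V dV : R -> R) B (L : R) :
  (forall x, is_derive V x (dV x)) -> (forall x, Rabs (V x) <= B) ->
  is_lim dV m_infty L -> L = 0.
Proof.
  intros HD HB HL. destruct (Req_dec L 0) as [|HL0]; auto. exfalso.
  assert (Ha : 0 < Rabs L) by (apply Rabs_pos_lt; auto).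
  assert (HB0 : 0 <= B) by (eapply Rle_trans; [apply Rabs_pos | apply (HB 0)]).
  destruct (is_lim_m_infty_elim dV L HL (Rabs L / 2)) as [M HM]; [lra|].
  set (T := 4 * (B + 1) / Rabs L).
  assert (HT : Rabs L / 2 * T = 2 * (B + 1)) by (unfold T; field; lra).
  destruct (MVT_bounded V dV B (M - 1 - T) (M - 1)) as [c [Hc Hbd]]; auto.
  { unfold T. assert (0 < 4 * (B + 1) / Rabs L) by (apply Rdiv_lt_0_compat; lra). lra. }
  specialize (HM c ltac:(lra)).
  assert (Rabs L <= Rabs (dV c) + Rabs (dV c - L)).
  { replace L with (dV c - (dV c - L)) at 1 by ring.
    eapply Rle_trans; [apply Rabs_triang|]. rewrite Rabs_Ropp. lra. }
  replace (M - 1 - (M - 1 - T)) with T in Hbd by ring.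
  assert (0 < T) by (unfold T; apply Rdiv_lt_0_compat; lra).
  nra.
Qed.

Lemma bounded_is_derive_lim_p_infty (V dV : R -> R) B (L : R) :
  (forall x, is_derive V x (dV x)) -> (forall x, Rabs (V x) <= B) ->
  is_lim dV p_infty L -> L = 0.
Proof.
  intros HD HB HL.
  assert (HL' : is_lim (fun x => - dV (- x)) m_infty (- L)).
  { apply (is_lim_opp (fun x => dV (- x)) m_infty L).
    apply (is_lim_comp dV Ropp m_infty L p_infty); auto.
    - apply (is_lim_opp (fun x => x) m_infty m_infty). apply is_lim_id.
    - exists 0. intros; discriminate. }
  cut (- L = 0); [lra|].
  apply (bounded_is_derive_lim_m_infty (fun x => V (- x)) (fun x => - dV (- x)) B); auto.
  intros x. replace (- dV (- x)) with (scal (-1) (dV (- x)))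
    by (unfold scal; simpl; unfold mult; simpl; ring).
  apply (is_derive_comp V Ropp x). apply HD.
  apply (is_derive_ext (fun y => - y)); [reflexivity|]. auto_derive; auto.
Qed.

Lemma const_bounds_equiv c1 c2 : 0 < c1 -> 0 < c2 -> exists C, 1 <= C /\
  forall a b, 0 <= b -> c1 * b <= a <= c2 * b -> b / C <= a /\ a <= C * b.
Proof.
  intros H1 H2. set (C := Rmax 1 (Rmax c2 (/ c1))). exists C.
  assert (HC1 : 1 <= C) by apply Rmax_l.
  assert (HC2 : c2 <= C) by (eapply Rle_trans; [apply Rmax_l | apply Rmax_r]).
  assert (HC3 : / c1 <= C) by (eapply Rle_trans; [apply Rmax_r | apply Rmax_r]).
  assert (HC4 : / C <= c1).
  { replace c1 with (/ / c1) by (field; lra). apply Rinv_le_contravar; [apply Rinv_0_lt_compat|]; auto. }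
  split; [exact HC1|]. intros a b Hb [Ha1 Ha2]. split.
  - unfold Rdiv. rewrite Rmult_comm. eapply Rle_trans; [|apply Ha1]. apply Rmult_le_compat_r; auto.
  - eapply Rle_trans; [apply Ha2|]. apply Rmult_le_compat_r; auto.
Qed.

Lemma equiv_pinfty_intro (a b : R -> R) X c1 c2 : 0 < c1 -> 0 < c2 ->
  (forall x, X < x -> 0 <= b x /\ c1 * b x <= a x <= c2 * b x) -> equiv_pinfty a b.
Proof.
  intros H1 H2 H. destruct (const_bounds_equiv c1 c2 H1 H2) as [C [HC HCb]].
  exists C, X. split; [exact HC|]. intros x Hx. apply HCb; apply H, Hx.
Qed.

Lemma equiv_minfty_intro (a b : R -> R) X c1 c2 : 0 < c1 -> 0 < c2 ->
  (forall x, x < X -> 0 <= b x /\ c1 * b x <= a x <= c2 * b x) -> equiv_minfty a b.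
Proof.
  intros H1 H2 H. destruct (const_bounds_equiv c1 c2 H1 H2) as [C [HC HCb]].
  exists C, X. split; [exact HC|]. intros x Hx. apply HCb; apply H, Hx.
Qed.

(** * Differential inequalities *)

Lemma gronwall_from_zero (w dw : R -> R) K a b : a <= b ->
  (forall x, a <= x <= b -> is_derive w x (dw x)) ->
  (forall x, a <= x <= b -> dw x <= K * w x) -> w a = 0 -> w b <= 0.
Proof.
  intros Hab HD HK Ha.
  assert (H : w b * exp (- K * b) <= w a * exp (- K * a)).
  { apply (is_derive_le0_nonincr (fun x => w x * exp (- K * x))
             (fun x => (dw x + - K * w x) * exp (- K * x)) a b Hab).
    - intros x Hx. apply is_derive_mult_exp, HD, Hx.
    - intros x Hx. specialize (HK x Hx). assert (0 < exp (- K * x)) by apply exp_pos. nra. }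
  rewrite Ha, Rmult_0_l in H. assert (0 < exp (- K * b)) by apply exp_pos. nra.
Qed.

Lemma gronwall_to_zero (w dw : R -> R) K a b : a <= b ->
  (forall x, a <= x <= b -> is_derive w x (dw x)) ->
  (forall x, a <= x <= b -> - K * w x <= dw x) -> w b = 0 -> w a <= 0.
Proof.
  intros Hab HD HK Hb.
  assert (H : w a * exp (K * a) <= w b * exp (K * b)).
  { apply (is_derive_ge0_nondecr (fun x => w x * exp (K * x))
             (fun x => (dw x + K * w x) * exp (K * x)) a b Hab).
    - intros x Hx. apply is_derive_mult_exp, HD, Hx.
    - intros x Hx. specialize (HK x Hx). assert (0 < exp (K * x)) by apply exp_pos. nra. }
  rewrite Hb, Rmult_0_l in H. assert (0 < exp (K * a)) by apply exp_pos. nra.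
Qed.

Section DecreasingSolution.

Variables (F U : R -> R) (u0 K del : R).
Hypothesis U_decr : forall x y, x <= y -> U y <= U x.
Hypothesis U_ode : forall x, is_derive U x (F (U x)).
Hypothesis F_lipschitz : forall v, Rabs (v - u0) < del -> Rabs (F v) <= K * Rabs (v - u0).

Lemma decr_solution_stays_at_root x0 x1 : x0 <= x1 ->
  U x0 = u0 -> u0 - del < U x1 -> U x1 = u0.
Proof.
  intros Hx HU0 HU1.
  assert (Hle : forall t, x0 <= t <= x1 -> 0 <= u0 - U t < del).
  { intros t Ht. generalize (U_decr x0 t ltac:(lra)) (U_decr t x1 ltac:(lra)). lra. }
  assert (u0 - U x1 <= 0); [|generalize (U_decr x0 x1 Hx); lra].
  apply (gronwall_from_zero (fun t => u0 - U t) (fun t => - F (U t)) K x0 x1); auto.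
  - intros t _. rewrite <- (Rminus_0_l (F (U t))).
    apply (is_derive_minus (fun _ => u0) U); [auto_derive; auto | apply U_ode].
  - intros t Ht. specialize (Hle t Ht).
    assert (Hd : Rabs (U t - u0) = u0 - U t) by (rewrite Rabs_minus_sym; apply Rabs_pos_eq; lra).
    pose proof (F_lipschitz (U t)) as HL. rewrite Hd in HL.
    generalize (HL (proj2 Hle)) (Rle_abs (- F (U t))). rewrite Rabs_Ropp. lra.
  - lra.
Qed.

Lemma decr_solution_never_reaches_root x1 x0 : x1 <= x0 ->
  U x1 < u0 + del -> U x0 = u0 -> U x1 = u0.
Proof.
  intros Hx HU1 HU0.
  assert (Hle : forall t, x1 <= t <= x0 -> 0 <= U t - u0 < del).
  { intros t Ht. generalize (U_decr x1 t ltac:(lra)) (U_decr t x0 ltac:(lra)). lra. }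
  assert (U x1 - u0 <= 0); [|generalize (U_decr x1 x0 Hx); lra].
  apply (gronwall_to_zero (fun t => U t - u0) (fun t => F (U t)) K x1 x0); auto.
  - intros t _. rewrite <- (Rminus_0_r (F (U t))).
    apply (is_derive_minus U (fun _ => u0)); [apply U_ode | auto_derive; auto].
  - intros t Ht. specialize (Hle t Ht).
    assert (Hd : Rabs (U t - u0) = U t - u0) by (apply Rabs_pos_eq; lra).
    pose proof (F_lipschitz (U t)) as HL. rewrite Hd in HL.
    generalize (HL (proj2 Hle)) (Rle_abs (- F (U t))). rewrite Rabs_Ropp. lra.
  - lra.
Qed.

End DecreasingSolution.

Lemma log_divergence_at_left (P dP : R -> R) a b c : a < b -> 0 < c ->
  (forall t, a < t <= b -> is_derive P t (dP t)) ->
  (forall t, a < t <= b -> dP t <= - c / (t - a)) ->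
  forall Y, exists t, a < t < b /\ Y < P t.
Proof.
  intros Hab Hc HD Hd Y.
  set (T := Rabs (Y - P b) + 1).
  assert (HT : 0 < T / c) by (apply Rdiv_lt_0_compat; [unfold T; generalize (Rabs_pos (Y - P b)); lra | lra]).
  assert (HE : 0 < exp (- (T / c)) < 1).
  { split; [apply exp_pos|]. rewrite <- exp_0. apply exp_increasing. lra. }
  set (t := a + (b - a) * exp (- (T / c))).
  assert (Ht : a < t < b) by (unfold t; split; nra).
  exists t. split; [exact Ht|].
  assert (HF : P b + c * ln (b - a) <= P t + c * ln (t - a)).
  { apply (is_derive_le0_nonincr (fun x => P x + c * ln (x - a)) (fun x => dP x + c / (x - a)) t b); [lra | |].
    - intros x Hx. apply (is_derive_plus P (fun x => c * ln (x - a))); [apply HD; lra|].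
      auto_derive; [lra | field; lra].
    - intros x Hx. specialize (Hd x ltac:(lra)). unfold Rdiv in *. lra. }
  assert (Hln : ln (t - a) = ln (b - a) - T / c).
  { unfold t. replace (a + (b - a) * exp (- (T / c)) - a) with ((b - a) * exp (- (T / c))) by ring.
    rewrite ln_mult, ln_exp by (lra || apply exp_pos). ring. }
  rewrite Hln in HF.
  assert (c * (ln (b - a) - T / c) = c * ln (b - a) - T) by (field; lra).
  unfold T in *. generalize (Rle_abs (Y - P b)). lra.
Qed.

Lemma log_divergence_at_right (P dP : R -> R) a b c : a < b -> 0 < c ->
  (forall t, a <= t < b -> is_derive P t (dP t)) ->
  (forall t, a <= t < b -> dP t <= - c / (b - t)) ->
  forall Y, exists t, a < t < b /\ P t < Y.
Proof.
  intros Hab Hc HD Hd Y.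
  destruct (log_divergence_at_left (fun t => - P (- t)) (fun t => dP (- t)) (- b) (- a) c)
    with (Y := - Y) as [t [Ht HY]]; try lra.
  - intros t Ht. replace (dP (- t)) with (- scal (-1) (dP (- t)))
      by (unfold scal; simpl; unfold mult; simpl; ring).
    apply (is_derive_opp (fun t => P (- t))), (is_derive_comp P Ropp); [apply HD; lra|].
    apply (is_derive_ext (fun y => - y)); [reflexivity|]. auto_derive; auto.
  - intros t Ht. replace (t - - b) with (b - - t) by ring. apply Hd. lra.
  - exists (- t). split; lra.
Qed.

Lemma linear_growth_of_derive_bounds (W dW : R -> R) X a b : 0 < a ->
  (forall x, X < x -> 0 < W x /\ is_derive W x (dW x) /\ a <= dW x <= b) ->
  exists X' c1 c2, 0 < X' /\ 0 < c1 /\ 0 < c2 /\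
    forall x, X' < x -> c1 * x <= W x <= c2 * x.
Proof.
  intros Ha HW. set (X1 := Rmax X 0 + 1).
  assert (HX1 : X < X1 /\ 1 <= X1) by (unfold X1; generalize (Rmax_l X 0) (Rmax_r X 0); lra).
  assert (HD : forall x, X1 <= x -> is_derive W x (dW x) /\ a <= dW x <= b)
    by (intros x Hx; apply HW; lra).
  assert (HW1 : 0 < W X1) by (apply HW; lra).
  assert (Hb : a <= b) by (destruct (HD X1 (Rle_refl _)); lra).
  exists (2 * X1), (a / 2), (W X1 + b). split; [lra|]. split; [lra|]. split; [lra|].
  intros x Hx.
  assert (Hlow : W X1 - a * X1 <= W x - a * x).
  { apply (is_derive_ge0_nondecr (fun t => W t - a * t) (fun t => dW t - a)); [lra | |].
    - intros t Ht. apply (is_derive_minus W (fun t => a * t)); [apply HD; lra | auto_derive; auto; ring].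
    - intros t Ht. destruct (HD t ltac:(lra)). lra. }
  assert (Hup : b * X1 - W X1 <= b * x - W x).
  { apply (is_derive_ge0_nondecr (fun t => b * t - W t) (fun t => b - dW t)); [lra | |].
    - intros t Ht. apply (is_derive_minus (fun t => b * t) W); [auto_derive; auto; ring | apply HD; lra].
    - intros t Ht. destruct (HD t ltac:(lra)). lra. }
  split; nra.
Qed.

Lemma exp_half_rate_bound_m_infty (w e : R -> R) lam X :
  (forall t, t <= X -> 0 < w t /\ is_derive w t (lam * w t + e t) /\ Rabs (e t) <= lam / 2 * w t) ->
  forall x, x <= X -> w x <= w X * exp (- (lam / 2) * X) * exp (lam / 2 * x).
Proof.
  intros Hw x Hx.
  assert (HF : w x * exp (- (lam / 2) * x) <= w X * exp (- (lam / 2) * X)).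
  { apply (is_derive_ge0_nondecr (fun t => w t * exp (- (lam / 2) * t))
             (fun t => (lam * w t + e t + - (lam / 2) * w t) * exp (- (lam / 2) * t))); [exact Hx | |].
    - intros t Ht. apply is_derive_mult_exp, Hw. lra.
    - intros t Ht. destruct (Hw t ltac:(lra)) as (_ & _ & He).
      generalize (Rle_abs (- e t)) (exp_pos (- (lam / 2) * t)). rewrite Rabs_Ropp. nra. }
  replace (w x) with (w x * exp (- (lam / 2) * x) * exp (lam / 2 * x))
    by (rewrite Rmult_assoc, <- exp_plus; replace (- (lam / 2) * x + lam / 2 * x) with 0 by ring;
        rewrite exp_0; ring).
  apply Rmult_le_compat_r; [apply Rlt_le, exp_pos | exact HF].
Qed.

Lemma is_derive_exp_bound_m_infty (F dF : R -> R) D k X : 0 < k ->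
  (forall t, t <= X -> is_derive F t (dF t) /\ Rabs (dF t) <= D * k * exp (k * t)) ->
  forall x, x <= X -> Rabs (F x - F X) <= D * exp (k * X).
Proof.
  intros Hk HF x Hx.
  assert (HD : 0 <= D).
  { destruct (HF X (Rle_refl X)) as [_ H]. destruct (Rle_lt_dec 0 D) as [|HD]; [assumption|].
    assert (D * k < 0) by nra. pose proof (exp_pos (k * X)). generalize (Rabs_pos (dF X)). nra. }
  assert (HDx : 0 <= D * exp (k * x)) by (apply Rmult_le_pos; [lra | apply Rlt_le, exp_pos]).
  apply Rabs_le. split.
  - assert (F X + - D * exp (k * X) <= F x + - D * exp (k * x)); [|lra].
    apply (is_derive_le0_nonincr (fun t => F t + - D * exp (k * t)) (fun t => dF t + - D * k * exp (k * t)));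
      [exact Hx | |].
    + intros t Ht. apply (is_derive_plus F (fun t => - D * exp (k * t))); [apply HF; lra | auto_derive; auto; ring].
    + intros t Ht. destruct (HF t ltac:(lra)) as [_ Hb]. generalize (Rle_abs (dF t)). lra.
  - assert (F x + D * exp (k * x) <= F X + D * exp (k * X)); [|lra].
    apply (is_derive_ge0_nondecr (fun t => F t + D * exp (k * t)) (fun t => dF t + D * k * exp (k * t)));
      [exact Hx | |].
    + intros t Ht. apply (is_derive_plus F (fun t => D * exp (k * t))); [apply HF; lra | auto_derive; auto; ring].
    + intros t Ht. destruct (HF t ltac:(lra)) as [_ Hb]. generalize (Rle_abs (- dF t)). rewrite Rabs_Ropp. lra.
Qed.

(* The crude bound [w = O(exp (lam x / 2))] makes [(ln w - lam x)' = e / w = O(w)] integrable at [-oo]. *)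
Lemma exp_rate_m_infty (w e : R -> R) lam M X : 0 < lam -> 0 <= M ->
  (forall t, t <= X -> 0 < w t /\ is_derive w t (lam * w t + e t) /\
     Rabs (e t) <= M * w t ^ 2 /\ Rabs (e t) <= lam / 2 * w t) ->
  exists c1 c2, 0 < c1 /\ 0 < c2 /\
    forall x, x <= X -> c1 * exp (lam * x) <= w x <= c2 * exp (lam * x).
Proof.
  intros Hlam HM Hw. set (k := lam / 2).
  set (D0 := w X * exp (- k * X)).
  assert (Hcrude : forall x, x <= X -> w x <= D0 * exp (k * x)).
  { apply (exp_half_rate_bound_m_infty w e lam X). intros t Ht. destruct (Hw t Ht) as (? & ? & _ & ?). auto. }
  set (F := fun t => ln (w t) - lam * t).
  set (D := M * D0 / k).
  assert (HF : forall t, t <= X -> is_derive F t (e t / w t) /\ Rabs (e t / w t) <= D * k * exp (k * t)).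
  { intros t Ht. destruct (Hw t Ht) as (Hp & Hd & H2 & _). split.
    - replace (e t / w t) with (scal (lam * w t + e t) (/ w t) - lam)
        by (unfold scal; simpl; unfold mult; simpl; field; lra).
      apply (is_derive_minus (fun t => ln (w t)) (fun t => lam * t)); [| auto_derive; auto; ring].
      apply (is_derive_comp ln w); [auto_derive; lra | exact Hd].
    - specialize (Hcrude t Ht).
      unfold Rdiv. rewrite Rabs_mult, Rabs_inv, (Rabs_pos_eq (w t)) by lra.
      apply (Rmult_le_reg_r (w t)); [exact Hp|]. rewrite Rmult_assoc, Rinv_l, Rmult_1_r by lra.
      replace (D * k) with (M * D0) by (unfold D, k; field; lra).
      assert (M * w t * w t <= M * (D0 * exp (k * t)) * w t)
        by (apply Rmult_le_compat_r; [lra | apply Rmult_le_compat_l; lra]).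
      simpl in H2. lra. }
  pose proof (is_derive_exp_bound_m_infty F _ D k X ltac:(unfold k; lra) HF) as Hbd.
  exists (exp (F X - D * exp (k * X))), (exp (F X + D * exp (k * X))).
  split; [apply exp_pos|]. split; [apply exp_pos|].
  intros x Hx. specialize (Hbd x Hx). apply Rabs_le_between' in Hbd.
  assert (Ew : w x = exp (F x) * exp (lam * x)).
  { rewrite <- exp_plus. unfold F. replace (ln (w x) - lam * x + lam * x) with (ln (w x)) by ring.
    rewrite exp_ln; [reflexivity | apply Hw, Hx]. }
  rewrite Ew. pose proof (exp_pos (lam * x)).
  split; apply Rmult_le_compat_r; try lra; apply exp_le_compat; lra.
Qed.

Lemma power_bounds_of_factorization (G c : R -> R) (N : nat) d0 : 0 < d0 ->
  (forall u, 0 < u < d0 -> G u < 0) -> continuity_pt c 0 -> c 0 <> 0 ->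
  (forall u, 0 < u < d0 -> exists z, 0 <= z <= u /\ G u = c z * u ^ N) ->
  exists del A B, 0 < del /\ 0 < A /\ 0 < B /\
    forall u, 0 < u < del -> - B * u ^ N <= G u <= - A * u ^ N.
Proof.
  intros Hd0 HG Hc Hc0 Hrep.
  assert (Hca : 0 < Rabs (c 0)) by (apply Rabs_pos_lt, Hc0).
  destruct (Hc (Rabs (c 0) / 2)) as [alp [Halp Hcz]]; [lra|]. simpl in Hcz. unfold R_dist in Hcz.
  set (del := Rmin alp d0).
  assert (Hdel : 0 < del /\ del <= alp /\ del <= d0)
    by (unfold del; split; [apply Rmin_pos | split; [apply Rmin_l | apply Rmin_r]]; lra).
  assert (Hclose : forall z, 0 <= z < del -> Rabs (c z - c 0) < Rabs (c 0) / 2).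
  { intros z Hz. destruct (Req_dec z 0) as [->|Hne]; [rewrite Rminus_diag, Rabs_R0; lra|].
    apply Hcz. split; [split; [exact I | auto] | rewrite Rminus_0_r, Rabs_pos_eq; lra]. }
  assert (Hpow : forall u, 0 < u -> 0 < u ^ N) by (intros; apply pow_lt; auto).
  assert (Hneg : c 0 < 0).
  { destruct (Rlt_le_dec (c 0) 0) as [|Hp]; auto.
    destruct (Hrep (del / 2)) as [z [Hz Hgz]]; [lra|].
    specialize (Hclose z ltac:(lra)). rewrite (Rabs_pos_eq (c 0)) in Hclose by lra.
    apply Rabs_def2 in Hclose.
    assert (0 < c z * (del / 2) ^ N) by (apply Rmult_lt_0_compat; [lra | apply Hpow; lra]).
    specialize (HG (del / 2) ltac:(lra)). lra. }
  exists del, (- c 0 / 2), (- 3 * c 0 / 2). split; [lra|]. split; [lra|]. split; [lra|].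
  intros u Hu. destruct (Hrep u) as [z [Hz Hgz]]; [lra|].
  specialize (Hclose z ltac:(lra)). rewrite (Rabs_left (c 0)) in Hclose by lra.
  apply Rabs_def2 in Hclose. specialize (Hpow u (proj1 Hu)).
  rewrite Hgz. split; nra.
Qed.

Lemma Taylor_sum_flat (f : R -> R) (k : nat) x : (1 <= k)%nat ->
  (forall j : nat, (2 <= j <= k)%nat -> Derive_n f j 0 = 0) ->
  sum_f_R0 (fun j => x ^ j / INR (Factorial.fact j) * Derive_n f j 0) k = f 0 + x * Derive f 0.
Proof.
  induction k as [|k IH]; intros Hk Hz; [lia|].
  destruct k as [|k].
  - simpl. change (fun x => f x) with f. field.
  - rewrite tech5, IH, (Hz (S (S k))) by (lia || (intros j Hj; apply Hz; lia)). ring.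
Qed.

(** * Traveling waves *)

Section TravelingWave.

Variables (m mu : R) (f : R -> R) (um s : R).
Hypotheses (Hm0 : 0 < m) (Hm1 : m < 1) (Hmu : 0 < mu) (Hf : smooth f) (Hum : 0 < um).

Let Hmm : 0 < mu * m := Rmult_lt_0_compat mu m Hmu Hm0.

Local Notation g := (gfun f s um).

Definition hfun (u : R) : R := g u * rpow u (1 - m) / (mu * m).

Lemma is_derive_g u : is_derive g u (Derive f u - s).
Proof. unfold gfun. auto_derive; [exact (Hf 1%nat u) | change (fun x => f x) with f; ring]. Qed.

Lemma g_um : g um = 0.
Proof. unfold gfun. ring. Qed.

Lemma g_0_of_RH : s = (f 0 - f um) / (0 - um) -> g 0 = 0.
Proof. intros ->. unfold gfun. field. lra. Qed.

Lemma hfun_0 : hfun 0 = 0.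
Proof. unfold hfun. rewrite rpow_nonpos by lra. unfold Rdiv. ring. Qed.

Lemma hfun_lipschitz_at_root u0 : g u0 = 0 -> exists K del, 0 < K /\ 0 < del /\
  forall v, Rabs (v - u0) < del -> Rabs (hfun v) <= K * Rabs (v - u0).
Proof.
  intros H0.
  destruct (is_derive_loc_lipschitz g u0 _ (is_derive_g u0)) as [del [Hdel Hb]].
  rewrite H0 in Hb. set (K1 := Rabs (Derive f u0 - s) + 1).
  assert (HK1 : 0 < K1) by (unfold K1; generalize (Rabs_pos (Derive f u0 - s)); lra).
  exists (K1 * (1 + Rabs u0 + del) / (mu * m)), del.
  split; [apply Rdiv_lt_0_compat; [generalize (Rabs_pos u0); nra | exact Hmm] |]. split; [exact Hdel|].
  intros v Hv. specialize (Hb v Hv). rewrite Rminus_0_r in Hb. fold K1 in Hb.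
  assert (Hr : rpow v (1 - m) <= 1 + Rabs u0 + del).
  { eapply Rle_trans; [apply rpow_le_1_plus_abs; lra|].
    generalize (Rabs_triang (v - u0) u0). replace (v - u0 + u0) with v by ring. lra. }
  unfold hfun, Rdiv. rewrite !Rabs_mult, Rabs_inv, (Rabs_pos_eq (mu * m)), (Rabs_pos_eq (rpow _ _))
    by (lra || apply rpow_ge0).
  replace (K1 * (1 + Rabs u0 + del) * / (mu * m) * Rabs (v - u0))
    with (K1 * Rabs (v - u0) * (1 + Rabs u0 + del) * / (mu * m)) by ring.
  apply Rmult_le_compat_r; [apply Rlt_le, Rinv_0_lt_compat, Hmm|].
  apply Rmult_le_compat; auto using Rabs_pos, rpow_ge0.
Qed.

Lemma is_profile_of_ode (U : R -> R) : (forall x y, x <= y -> U y <= U x) ->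
  is_lim U m_infty um -> is_lim U p_infty 0 -> (forall x, 0 < U x) ->
  (forall x, is_derive U x (hfun (U x))) -> is_profile f mu m s um U.
Proof.
  intros Hdec Hlm Hlp Hpos HD.
  assert (HV : forall x, is_derive (fun x => rpow (U x) m) x (g (U x) / mu)).
  { intros x. replace (g (U x) / mu) with (m * rpow (U x) (m - 1) * hfun (U x)).
    - apply is_derive_rpow_comp; auto.
    - assert (E : rpow (U x) (m - 1) * rpow (U x) (1 - m) = 1).
      { rewrite <- rpow_plus by auto. replace (m - 1 + (1 - m)) with 0 by ring. apply rpow_0; auto. }
      unfold hfun. replace (m * rpow (U x) (m - 1) * (g (U x) * rpow (U x) (1 - m) / (mu * m)))
        with (g (U x) / mu * (rpow (U x) (m - 1) * rpow (U x) (1 - m))) by (field; lra).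
      rewrite E. ring. }
  assert (HDV : forall x, Derive (fun x => rpow (U x) m) x = g (U x) / mu)
    by (intros; apply is_derive_unique, HV).
  assert (HW : forall x, is_derive (fun x => g (U x) / mu) x ((Derive f (U x) - s) * hfun (U x) / mu)).
  { intros x. apply (is_derive_ext (fun x => / mu * g (U x))); [intros t; simpl; unfold Rdiv; ring|].
    replace ((Derive f (U x) - s) * hfun (U x) / mu)
      with (/ mu * scal (hfun (U x)) (Derive f (U x) - s))
      by (unfold scal; simpl; unfold mult; simpl; field; lra).
    apply is_derive_scal, (is_derive_comp g U); [apply is_derive_g | apply HD]. }
  assert (HF : forall x, is_derive (fun x => f (U x)) x (Derive f (U x) * hfun (U x))).
  { intros x. replace (Derive f (U x) * hfun (U x)) with (scal (hfun (U x)) (Derive f (U x)))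
      by (unfold scal; simpl; unfold mult; simpl; ring).
    apply (is_derive_comp f U); [apply Derive_correct, (Hf 1%nat) | apply HD]. }
  split; [exact Hdec|]. split; [exact Hlm|]. split; [exact Hlp|].
  intros x. split; [|split; [|split]].
  - eexists; apply HD.
  - eexists; apply HV.
  - eexists. apply (is_derive_ext (fun x => g (U x) / mu)); [intros; now rewrite HDV | apply HW].
  - rewrite (Derive_ext (Derive (fun x => rpow (U x) m)) (fun x => g (U x) / mu)) by apply HDV.
    replace (Derive U x) with (hfun (U x)) by (symmetry; apply is_derive_unique, HD).
    replace (Derive (fun x => f (U x)) x) with (Derive f (U x) * hfun (U x))
      by (symmetry; apply is_derive_unique, HF).
    replace (Derive (fun x => g (U x) / mu) x) with ((Derive f (U x) - s) * hfun (U x) / mu)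
      by (symmetry; apply is_derive_unique, HW).
    field. lra.
Qed.

Section NecessaryConditions.

Variable U : R -> R.
Hypothesis HU : is_profile f mu m s um U.

Let V x := rpow (U x) m.

Lemma profile_decr x y : x <= y -> U y <= U x.
Proof. apply HU. Qed.

Lemma profile_continuous x : continuity_pt U x.
Proof. destruct HU as (_ & _ & _ & HE). destruct (HE x) as [[d Hd] _]. exact (is_derive_continuity_pt U x d Hd). Qed.

Lemma profile_range_closed x : 0 <= U x <= um.
Proof. destruct HU as (Hdec & Hlm & Hlp & _). apply (decr_between_lims U); auto. Qed.

Lemma profile_attains v : 0 < v < um -> exists x, U x = v.
Proof. destruct HU as (_ & Hlm & Hlp & _). apply IVT_lim; auto using profile_continuous. Qed.

Lemma profile_first_integral_const : exists Q0, forall x, mu * Derive V x = Q0 - s * U x + f (U x).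
Proof.
  destruct HU as (_ & _ & _ & HE).
  set (Q := fun x => mu * Derive V x + s * U x - f (U x)).
  assert (HQ : forall x, is_derive Q x 0).
  { intros x. destruct (HE x) as ([dU HdU] & _ & [d2V Hd2V] & Hode).
    assert (HfU : is_derive (fun x => f (U x)) x (dU * Derive f (U x))).
    { apply (is_derive_comp f U); [apply Derive_correct, (Hf 1%nat) | exact HdU]. }
    replace (Derive (fun x => f (U x)) x) with (dU * Derive f (U x)) in Hode
      by (symmetry; apply is_derive_unique, HfU).
    rewrite (is_derive_unique _ _ _ HdU), (is_derive_unique _ _ _ Hd2V) in Hode.
    replace 0 with (mu * d2V + s * dU - dU * Derive f (U x)) by lra.
    apply (is_derive_minus (fun x => mu * Derive V x + s * U x) (fun x => f (U x))); [|exact HfU].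
    apply (is_derive_plus (fun x => mu * Derive V x) (fun x => s * U x));
      apply is_derive_scal; assumption. }
  exists (Q 0). intros x. rewrite <- (is_derive_0_const Q HQ x 0). unfold Q. ring.
Qed.

Lemma profile_first_integral :
  s = (f 0 - f um) / (0 - um) /\ forall x, mu * Derive V x = g (U x).
Proof.
  destruct profile_first_integral_const as [Q0 HQ0].
  destruct HU as (_ & Hlm & Hlp & HE).
  set (G := fun u => (Q0 - s * u + f u) / mu).
  assert (HdV : forall x, Derive V x = G (U x)) by (intros x; unfold G; rewrite <- HQ0; field; lra).
  assert (HGc : forall u, continuous G u).
  { intros u. apply (ex_derive_continuous G). unfold G. auto_derive. exact (Hf 1%nat u). }
  assert (HV : forall x, is_derive V x (Derive V x)) by (intros x; apply Derive_correct, HE).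
  assert (HVb : forall x, Rabs (V x) <= 1 + um).
  { intros x. destruct (profile_range_closed x). unfold V.
    rewrite Rabs_pos_eq by apply rpow_ge0.
    eapply Rle_trans; [apply rpow_le_1_plus_abs; lra|]. rewrite Rabs_pos_eq; lra. }
  assert (HGum : G um = 0).
  { apply (bounded_is_derive_lim_m_infty V (Derive V) (1 + um)); auto.
    apply (is_lim_ext (fun x => G (U x))); [intros; now rewrite HdV|].
    apply is_lim_comp_continuous; auto. }
  assert (HG0 : G 0 = 0).
  { apply (bounded_is_derive_lim_p_infty V (Derive V) (1 + um)); auto.
    apply (is_lim_ext (fun x => G (U x))); [intros; now rewrite HdV|].
    apply is_lim_comp_continuous; auto. }
  unfold G in HGum, HG0.
  assert (HQa : Q0 = s * um - f um) by (apply (Rmult_eq_compat_r mu) in HGum; field_simplify in HGum; lra).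
  assert (HQb : Q0 = - f 0) by (apply (Rmult_eq_compat_r mu) in HG0; field_simplify in HG0; lra).
  split.
  - field_simplify_eq; lra.
  - intros x. rewrite HQ0, HQa. unfold gfun. ring.
Qed.

Lemma profile_is_derive x : is_derive U x (hfun (U x)).
Proof.
  destruct HU as (_ & _ & _ & HE). destruct (HE x) as ([dU HdU] & _).
  destruct (profile_range_closed x) as [[Hpos|Hzero] _].
  - replace (hfun (U x)) with dU; [exact HdU|].
    assert (HV : is_derive V x (m * rpow (U x) (m - 1) * dU)) by (apply is_derive_rpow_comp; auto).
    assert (E : rpow (U x) (m - 1) * rpow (U x) (1 - m) = 1).
    { rewrite <- rpow_plus by auto. replace (m - 1 + (1 - m)) with 0 by ring. apply rpow_0; auto. }
    unfold hfun. rewrite <- (proj2 profile_first_integral x), (is_derive_unique _ _ _ HV).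
    replace (mu * (m * rpow (U x) (m - 1) * dU) * rpow (U x) (1 - m) / (mu * m))
      with (dU * (rpow (U x) (m - 1) * rpow (U x) (1 - m))) by (field; lra).
    rewrite E, Rmult_1_r. reflexivity.
  - rewrite <- Hzero, hfun_0. replace 0 with dU; [exact HdU|].
    apply (is_derive_0_at_min U x dU HdU). intros y. rewrite <- Hzero. apply profile_range_closed.
Qed.

Lemma profile_not_at_root x : 0 < U x -> g (U x) <> 0.
Proof.
  intros Hx Hg0.
  destruct (hfun_lipschitz_at_root (U x) Hg0) as (K & del & HK & Hdel & HL).
  set (v := U x - Rmin del (U x) / 2).
  assert (Hv : U x - del < v < U x /\ 0 < v).
  { unfold v. generalize (Rmin_l del (U x)) (Rmin_r del (U x)) (Rmin_pos del (U x) Hdel Hx). lra. }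
  destruct (profile_attains v) as [x1 Hx1]; [generalize (profile_range_closed x); lra|].
  assert (Hxx1 : x <= x1).
  { destruct (Rle_lt_dec x x1) as [|Hlt]; auto. generalize (profile_decr x1 x (Rlt_le _ _ Hlt)). lra. }
  assert (U x1 = U x); [|lra].
  apply (decr_solution_stays_at_root hfun U (U x) K del profile_decr profile_is_derive HL x x1);
    auto; lra.
Qed.

Lemma profile_pos x : 0 < U x.
Proof.
  destruct (profile_range_closed x) as [[Hpos|Hzero] _]; auto. exfalso.
  destruct (hfun_lipschitz_at_root 0 (g_0_of_RH (proj1 profile_first_integral)))
    as (K & del & HK & Hdel & HL).
  set (v := Rmin del um / 2).
  assert (Hv : 0 < v < del /\ v < um).
  { unfold v. generalize (Rmin_l del um) (Rmin_r del um) (Rmin_pos del um Hdel Hum). lra. }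
  destruct (profile_attains v) as [x1 Hx1]; [lra|].
  assert (Hx1x : x1 <= x).
  { destruct (Rle_lt_dec x1 x) as [|Hlt]; auto. generalize (profile_decr x x1 (Rlt_le _ _ Hlt)). lra. }
  assert (U x1 = 0); [|lra].
  apply (decr_solution_never_reaches_root hfun U 0 K del profile_decr profile_is_derive HL x1 x);
    auto; lra.
Qed.

Lemma profile_lt_um x : U x < um.
Proof.
  destruct (profile_range_closed x) as [_ [Hlt|Heq]]; auto.
  exfalso. apply (profile_not_at_root x); [apply profile_pos | rewrite Heq; apply g_um].
Qed.

Lemma profile_g_neg u : 0 < u < um -> g u < 0.
Proof.
  intros Hu. destruct (profile_attains u Hu) as [x <-].
  destruct HU as (_ & _ & _ & HE). destruct (HE x) as (_ & [dV HdV] & _).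
  assert (HdV0 : dV <= 0).
  { apply (is_derive_le0_of_decr V x dV HdV). intros y Hy.
    apply rpow_le_compat_l; [split; [apply Rlt_le, profile_pos | apply profile_decr, Hy] | lra]. }
  assert (Hle : g (U x) <= 0).
  { rewrite <- (proj2 profile_first_integral x).
    replace (Derive V x) with dV by (symmetry; apply is_derive_unique, HdV). nra. }
  destruct Hle as [|Heq]; auto. exfalso. exact (profile_not_at_root x (proj1 Hu) Heq).
Qed.

End NecessaryConditions.

Section SufficientConditions.

Hypothesis HRH : s = (f 0 - f um) / (0 - um).
Hypothesis Hg : forall u, 0 < u < um -> g u < 0.

Lemma hfun_neg u : 0 < u < um -> hfun u < 0.
Proof.
  intros Hu. unfold hfun. apply Rdiv_neg_pos; [| apply Rmult_lt_0_compat; auto].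
  apply Rmult_neg_pos; [apply Hg, Hu | apply rpow_gt0; lra].
Qed.

Definition Phi (u : R) : R := RInt (fun v => / hfun v) (um / 2) u.

Lemma is_derive_Phi u : 0 < u < um -> is_derive Phi u (/ hfun u).
Proof.
  intros Hu.
  assert (Hc : forall v, 0 < v < um -> continuous (fun v => / hfun v) v).
  { intros v Hv. apply (ex_derive_continuous (fun v => / hfun v)).
    assert (Hd : ex_derive hfun v).
    { apply (ex_derive_div (fun u => g u * rpow u (1 - m)) (fun _ => mu * m));
        [| apply ex_derive_const | apply Rgt_not_eq, Rmult_lt_0_compat; auto].
      apply (ex_derive_mult g (fun u => rpow u (1 - m))); eexists;
        [apply is_derive_g | apply is_derive_rpow; lra]. }
    apply ex_derive_inv; [exact Hd | apply Rlt_not_eq, hfun_neg, Hv]. }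
  apply (is_derive_RInt (fun v => / hfun v) Phi (um / 2)); [| apply Hc, Hu].
  apply (filter_imp (fun b => 0 < b < um)).
  - intros b Hb. apply (RInt_correct (V := R_CompleteNormedModule)).
    apply (ex_RInt_continuous (V := R_CompleteNormedModule)).
    intros z Hz. apply Hc. split.
    + eapply Rlt_le_trans; [|apply Hz]. apply Rmin_glb_lt; lra.
    + eapply Rle_lt_trans; [apply Hz|]. apply Rmax_lub_lt; lra.
  - apply (open_and _ _ (open_gt 0) (open_lt um)), Hu.
Qed.

Lemma Phi_decr a b : 0 < a -> a < b -> b < um -> Phi b < Phi a.
Proof.
  intros Ha Hab Hb. apply (is_derive_lt0_decr Phi (fun u => / hfun u)); auto.
  - intros x Hx. apply is_derive_Phi. lra.
  - intros x Hx. apply Rinv_lt_0_compat, hfun_neg. lra.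
Qed.

Lemma Phi_nonincr a b : 0 < a -> a <= b -> b < um -> Phi b <= Phi a.
Proof. intros Ha [Hab|<-] Hb; [apply Rlt_le, Phi_decr | apply Rle_refl]; auto. Qed.

Lemma lt_of_Phi_lt u v : 0 < u < um -> 0 < v < um -> Phi v < Phi u -> u < v.
Proof.
  intros Hu Hv HP. destruct (Rlt_le_dec u v) as [|Hle]; auto.
  generalize (Phi_nonincr v u ltac:(lra) Hle ltac:(lra)). lra.
Qed.

Lemma Phi_inj a b : 0 < a < um -> 0 < b < um -> Phi a = Phi b -> a = b.
Proof.
  intros Ha Hb E. destruct (Rtotal_order a b) as [Hl|[Hl|Hl]]; auto; exfalso.
  - generalize (Phi_decr a b ltac:(lra) Hl ltac:(lra)). lra.
  - generalize (Phi_decr b a ltac:(lra) Hl ltac:(lra)). lra.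
Qed.

Lemma inv_hfun_log_bound u0 : g u0 = 0 -> exists c del, 0 < c /\ 0 < del /\
  forall v, 0 < v < um -> Rabs (v - u0) < del -> / hfun v <= - c / Rabs (v - u0).
Proof.
  intros H0. destruct (hfun_lipschitz_at_root u0 H0) as (K & del & HK & Hdel & HL).
  exists (/ K), del. split; [apply Rinv_0_lt_compat, HK|]. split; [exact Hdel|].
  intros v Hv Hvd. specialize (HL v Hvd). pose proof (hfun_neg v Hv) as Hh.
  rewrite Rabs_left in HL by exact Hh.
  assert (Hr : 0 < Rabs (v - u0)) by nra.
  assert (/ (K * Rabs (v - u0)) <= / - hfun v) by (apply Rinv_le_contravar; lra).
  replace (/ hfun v) with (- / - hfun v) by (field; lra).
  replace (- / K / Rabs (v - u0)) with (- / (K * Rabs (v - u0))) by (field; lra).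
  lra.
Qed.

Lemma Phi_unbounded_at_0 Y : exists u, 0 < u < um /\ Y < Phi u.
Proof.
  destruct (inv_hfun_log_bound 0 (g_0_of_RH HRH)) as (c & del & Hc & Hdel & Hb).
  set (b := Rmin del um / 2).
  assert (Hbd : 0 < b < del /\ b < um).
  { unfold b. generalize (Rmin_l del um) (Rmin_r del um) (Rmin_pos del um Hdel Hum). lra. }
  destruct (log_divergence_at_left Phi (fun u => / hfun u) 0 b c) with (Y := Y) as [u [Hu HY]]; try lra.
  - intros t Ht. apply is_derive_Phi. lra.
  - intros t Ht. rewrite Rminus_0_r. specialize (Hb t ltac:(lra)).
    rewrite Rminus_0_r, Rabs_pos_eq in Hb by lra. apply Hb; lra.
  - exists u. split; [lra | exact HY].
Qed.

Lemma Phi_unbounded_at_um Y : exists u, 0 < u < um /\ Phi u < Y.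
Proof.
  destruct (inv_hfun_log_bound um g_um) as (c & del & Hc & Hdel & Hb).
  set (a := um - Rmin del um / 2).
  assert (Ha : 0 < a < um /\ um - a < del).
  { unfold a. generalize (Rmin_l del um) (Rmin_r del um) (Rmin_pos del um Hdel Hum). lra. }
  destruct (log_divergence_at_right Phi (fun u => / hfun u) a um c) with (Y := Y) as [u [Hu HY]]; try lra.
  - intros t Ht. apply is_derive_Phi. lra.
  - intros t Ht. specialize (Hb t ltac:(lra)).
    rewrite Rabs_minus_sym, Rabs_pos_eq in Hb by lra. apply Hb; lra.
  - exists u. split; [lra | exact HY].
Qed.

Lemma Phi_surj xi : exists u, 0 < u < um /\ Phi u = xi.
Proof.
  destruct (Phi_unbounded_at_0 xi) as [ua [Hua Ha]].
  destruct (Phi_unbounded_at_um xi) as [ub [Hub Hb]].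
  assert (Hab : ua < ub) by (apply lt_of_Phi_lt; lra).
  destruct (IVT_interv (fun t => xi - Phi t) ua ub) as [z [Hz Hz2]]; try lra.
  - intros t Ht. apply continuity_pt_minus; [apply continuity_pt_const; now intros ? ? |].
    apply (is_derive_continuity_pt Phi t (/ hfun t)), is_derive_Phi. lra.
  - exists z. split; lra.
Qed.

Lemma Phi_inverse_exists : exists U, forall xi, 0 < U xi < um /\ Phi (U xi) = xi.
Proof.
  exists (fun xi => proj1_sig (constructive_indefinite_description _ (Phi_surj xi))).
  intros xi. exact (proj2_sig (constructive_indefinite_description _ (Phi_surj xi))).
Qed.

Lemma Phi_inverse_is_profile U : (forall xi, 0 < U xi < um /\ Phi (U xi) = xi) ->
  is_profile f mu m s um U.
Proof.
  intros HU.
  assert (Hc : forall x, continuity_pt U x)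
    by (intros; apply (continuity_pt_inverse_decr Phi U 0 um); auto using Phi_decr).
  assert (Hsmall : forall eps : posreal, 0 < Rmin eps um / 2 < eps /\ Rmin eps um / 2 < um).
  { intros eps. generalize (Rmin_l eps um) (Rmin_r eps um) (Rmin_pos eps um (cond_pos eps) Hum). lra. }
  apply is_profile_of_ode; [| | | apply HU |].
  - intros x y Hxy. destruct (Rle_lt_dec (U y) (U x)) as [|Hlt]; auto.
    destruct (HU x) as [Hx Ex], (HU y) as [Hy Ey].
    generalize (Phi_decr (U x) (U y) ltac:(lra) Hlt ltac:(lra)). lra.
  - apply is_lim_spec. intros eps. specialize (Hsmall eps).
    exists (Phi (um - Rmin eps um / 2)). intros x Hx. destruct (HU x) as [Hu Eu].
    assert (um - Rmin eps um / 2 < U x) by (apply lt_of_Phi_lt; lra).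
    apply Rabs_def1; lra.
  - apply is_lim_spec. intros eps. specialize (Hsmall eps).
    exists (Phi (Rmin eps um / 2)). intros x Hx. destruct (HU x) as [Hu Eu].
    assert (U x < Rmin eps um / 2) by (apply lt_of_Phi_lt; lra).
    apply Rabs_def1; lra.
  - intros xi. destruct (HU xi) as [Hu _].
    replace (hfun (U xi)) with (/ / hfun (U xi)) by (field; apply Rlt_not_eq, hfun_neg, Hu).
    apply (is_derive_inverse Phi U); [apply HU | apply Hc | apply is_derive_Phi, Hu |].
    apply Rinv_neq_0_compat, Rlt_not_eq, hfun_neg, Hu.
Qed.

Lemma Phi_profile_shift U : is_profile f mu m s um U -> forall xi, Phi (U xi) = xi + Phi (U 0).
Proof.
  intros HP.
  assert (Hr : forall x, 0 < U x < um) by (intros; split; [apply (profile_pos U) | apply (profile_lt_um U)]; auto).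
  assert (HK : forall xi, is_derive (fun x => Phi (U x) - x) xi 0).
  { intros xi. replace 0 with (scal (hfun (U xi)) (/ hfun (U xi)) - 1).
    - apply (is_derive_minus (fun x => Phi (U x)) (fun x => x)); [|auto_derive; auto].
      apply (is_derive_comp Phi U); [apply is_derive_Phi, Hr | apply (profile_is_derive U HP)].
    - unfold scal; simpl; unfold mult; simpl. field. apply Rlt_not_eq, hfun_neg, Hr. }
  intros xi. generalize (is_derive_0_const _ HK xi 0). lra.
Qed.

Lemma profile_unique U1 U2 : is_profile f mu m s um U1 -> is_profile f mu m s um U2 ->
  exists c, forall xi, U2 xi = U1 (xi + c).
Proof.
  intros H1 H2. exists (Phi (U2 0) - Phi (U1 0)). intros xi.
  apply Phi_inj; [split; [apply (profile_pos U2) | apply (profile_lt_um U2)]; auto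
                 | split; [apply (profile_pos U1) | apply (profile_lt_um U1)]; auto |].
  rewrite (Phi_profile_shift U1 H1), (Phi_profile_shift U2 H2). ring.
Qed.

Lemma g_power_bounds_nondegenerate : Derive f 0 < s -> exists del A B, 0 < del /\ 0 < A /\ 0 < B /\
  forall u, 0 < u < del -> - B * u ^ 1 <= g u <= - A * u ^ 1.
Proof.
  intros Hs. apply (power_bounds_of_factorization g (fun z => Derive f z - s) 1 um Hum Hg).
  - apply continuity_pt_minus; [| apply continuity_pt_const; now intros ? ?].
    apply (is_derive_continuity_pt _ _ _ (Derive_correct _ _ (Hf 2%nat 0))).
  - lra.
  - intros u Hu.
    destruct (MVT_interval g (fun z => Derive f z - s) 0 u ltac:(lra) (fun z _ => is_derive_g z))
      as [z [Hz E]].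
    exists z. split; [exact Hz|]. rewrite g_0_of_RH in E by exact HRH. simpl. lra.
Qed.

Lemma g_power_bounds_degenerate (k : nat) : (1 <= k)%nat -> Derive f 0 = s ->
  (forall j : nat, (2 <= j <= k)%nat -> Derive_n f j 0 = 0) -> Derive_n f (S k) 0 <> 0 ->
  exists del A B, 0 < del /\ 0 < A /\ 0 < B /\
    forall u, 0 < u < del -> - B * u ^ S k <= g u <= - A * u ^ S k.
Proof.
  intros Hk Hs Hflat Hnz.
  assert (Hfact : 0 < INR (Factorial.fact (S k))) by apply INR_fact_lt_0.
  apply (power_bounds_of_factorization g (fun z => Derive_n f (S k) z / INR (Factorial.fact (S k)))
           (S k) um Hum Hg).
  - apply continuity_pt_div; [| apply continuity_pt_const; now intros ? ? | lra].
    apply (is_derive_continuity_pt _ _ _ (Derive_correct _ _ (Hf (S (S k)) 0))).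
  - intros E. apply Hnz. apply (Rmult_eq_compat_r (INR (Factorial.fact (S k)))) in E.
    unfold Rdiv in E. rewrite Rmult_assoc, Rinv_l, Rmult_1_r, Rmult_0_l in E by lra. exact E.
  - intros u Hu. destruct (Taylor_Lagrange f k 0 u) as [z [Hz Ht]]; [lra | intros; apply Hf |].
    exists z. split; [lra|].
    rewrite Taylor_sum_flat, Rminus_0_r in Ht by auto.
    assert (E : s * um = f um - f 0) by (rewrite HRH; field; lra).
    unfold gfun. rewrite Ht, <- Hs. replace (- Derive f 0 * (u - um)) with (- (Derive f 0 * u) + s * um)
      by (rewrite Hs; ring).
    rewrite E. field. lra.
Qed.

Section DecayAtPlusInfinity.

Variables (U : R -> R) (N : nat) (del A B : R).
Hypotheses (HU : is_profile f mu m s um U) (HN : (1 <= N)%nat)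
  (Hdel : 0 < del) (HA : 0 < A) (HB : 0 < B)
  (Hgb : forall u, 0 < u < del -> - B * u ^ N <= g u <= - A * u ^ N).

Lemma profile_slope_power_bounds : exists X, forall x, X < x ->
  A / (mu * m) * rpow (U x) (INR N + 1 - m) <= - hfun (U x) <= B / (mu * m) * rpow (U x) (INR N + 1 - m).
Proof.
  destruct HU as (_ & _ & Hlp & _).
  destruct (is_lim_p_infty_elim U 0 Hlp del Hdel) as [X HX]. exists X. intros x Hx.
  pose proof (profile_pos U HU x) as Hpos.
  specialize (HX x Hx). rewrite Rminus_0_r in HX. apply Rabs_def2 in HX.
  pose proof (Hgb (U x) ltac:(lra)) as Hgx.
  assert (Hr : 0 < rpow (U x) (1 - m)) by (apply rpow_gt0, Hpos).
  replace (INR N + 1 - m) with (INR N + (1 - m)) by ring.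
  rewrite rpow_plus, rpow_pow by exact Hpos.
  assert (E : forall C, C / (mu * m) * (U x ^ N * rpow (U x) (1 - m))
                        = C * U x ^ N * rpow (U x) (1 - m) * / (mu * m)) by (intros; field; lra).
  rewrite !E. unfold hfun, Rdiv. rewrite !Ropp_mult_distr_l.
  split; apply Rmult_le_compat_r; try apply Rlt_le, Rinv_0_lt_compat, Hmm;
    apply Rmult_le_compat_r; lra.
Qed.

Lemma profile_slope_equiv_p_infty :
  equiv_pinfty (fun xi => rpow (Rabs (Derive U xi)) (1 / (INR N + 1 - m))) (fun xi => Rabs (U xi - 0)).
Proof.
  destruct profile_slope_power_bounds as [X HX].
  set (p := INR N + 1 - m).
  assert (Hp : 0 < p) by (unfold p; generalize (pos_INR N); lra).
  assert (Hroot : forall C x, 0 < C -> rpow (C * rpow (U x) p) (1 / p) = rpow C (1 / p) * U x).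
  { intros C x HC. pose proof (profile_pos U HU x).
    rewrite rpow_mult_distr, rpow_rpow by (auto; apply rpow_gt0; auto).
    replace (p * (1 / p)) with 1 by (field; lra). rewrite rpow_1; auto. }
  apply (equiv_pinfty_intro _ _ X (rpow (A / (mu * m)) (1 / p)) (rpow (B / (mu * m)) (1 / p)));
    [apply rpow_gt0, Rdiv_lt_0_compat; auto .. |].
  intros x Hx. specialize (HX x Hx). fold p in HX. pose proof (profile_pos U HU x) as Hpos.
  assert (0 < rpow (U x) p) by (apply rpow_gt0, Hpos).
  assert (0 < A / (mu * m)) by (apply Rdiv_lt_0_compat; auto).
  assert (0 < A / (mu * m) * rpow (U x) p) by (apply Rmult_lt_0_compat; lra).
  rewrite Rminus_0_r, (Rabs_pos_eq (U x)) by lra.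
  rewrite (is_derive_unique _ _ _ (profile_is_derive U HU x)), Rabs_left by (apply hfun_neg; split; [exact Hpos | apply (profile_lt_um U HU)]).
  assert (Hq : 0 <= 1 / p) by (apply Rlt_le, Rdiv_lt_0_compat; lra).
  split; [lra|]. split.
  - rewrite <- Hroot by (apply Rdiv_lt_0_compat; auto). apply rpow_le_compat_l; [split; [lra | exact (proj1 HX)] | exact Hq].
  - rewrite <- Hroot by (apply Rdiv_lt_0_compat; auto). apply rpow_le_compat_l; [split; [lra | exact (proj2 HX)] | exact Hq].
Qed.

(* [U^(m - N)] has derivative between two positive constants, so it grows linearly. *)
Lemma profile_equiv_power_p_infty :
  equiv_pinfty (fun xi => Rabs (U xi - 0)) (fun xi => rpow (Rabs xi) (- (1 / (INR N - m)))).
Proof.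
  destruct profile_slope_power_bounds as [X HX].
  set (p := INR N + 1 - m). set (q := INR N - m). fold p in HX.
  assert (HN1 : 1 <= INR N) by (apply (le_INR 1 N) in HN; exact HN).
  assert (Hq : 0 < q) by (unfold q; lra).
  set (W := fun x => rpow (U x) (- q)).
  assert (HW : forall x, X < x -> 0 < W x /\ is_derive W x (- q * rpow (U x) (- q - 1) * hfun (U x)) /\
            q * (A / (mu * m)) <= - q * rpow (U x) (- q - 1) * hfun (U x) <= q * (B / (mu * m))).
  { intros x Hx. pose proof (profile_pos U HU x) as Hpos.
    split; [apply rpow_gt0, Hpos|]. split; [apply is_derive_rpow_comp; [apply (profile_is_derive U HU) | exact Hpos]|].
    assert (E : rpow (U x) (- q - 1) * rpow (U x) p = 1).
    { rewrite <- rpow_plus by exact Hpos. replace (- q - 1 + p) with 0 by (unfold p, q; ring). apply rpow_0, Hpos. }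
    assert (Hr : 0 < q * rpow (U x) (- q - 1)) by (apply Rmult_lt_0_compat; [exact Hq | apply rpow_gt0, Hpos]).
    specialize (HX x Hx).
    replace (- q * rpow (U x) (- q - 1) * hfun (U x)) with (q * rpow (U x) (- q - 1) * - hfun (U x)) by ring.
    assert (Hscale : forall C, q * C = q * rpow (U x) (- q - 1) * (C * rpow (U x) p)).
    { intros C. transitivity (q * C * (rpow (U x) (- q - 1) * rpow (U x) p)); [rewrite E|]; ring. }
    rewrite (Hscale (A / (mu * m))), (Hscale (B / (mu * m))).
    split; apply Rmult_le_compat_l; lra. }
  destruct (linear_growth_of_derive_bounds W (fun x => - q * rpow (U x) (- q - 1) * hfun (U x)) X
             (q * (A / (mu * m))) (q * (B / (mu * m))))
    as (X' & c1 & c2 & HX' & Hc1 & Hc2 & Hlin); [apply Rmult_lt_0_compat; [exact Hq | apply Rdiv_lt_0_compat; auto] | exact HW |].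
  apply (equiv_pinfty_intro _ _ X' (rpow c2 (- (1 / q))) (rpow c1 (- (1 / q))));
    [apply rpow_gt0; auto .. |].
  intros x Hx. pose proof (profile_pos U HU x) as Hpos.
  rewrite Rminus_0_r, (Rabs_pos_eq (U x)), (Rabs_pos_eq x) by lra.
  assert (HUW : U x = rpow (W x) (- (1 / q))).
  { unfold W. rewrite rpow_rpow by exact Hpos. replace (- q * - (1 / q)) with 1 by (field; lra).
    symmetry. apply rpow_1, Hpos. }
  destruct (Hlin x Hx) as [Hlo Hup].
  assert (Hq' : 0 <= 1 / q) by (apply Rlt_le, Rdiv_lt_0_compat; lra).
  split; [apply rpow_ge0|].
  rewrite HUW, <- !rpow_mult_distr by lra.
  assert (0 < c1 * x) by (apply Rmult_lt_0_compat; lra).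
  split; apply rpow_opp_le_compat_l; auto; lra.
Qed.

Lemma profile_decay_p_infty :
  equiv_pinfty (fun xi => rpow (Rabs (Derive U xi)) (1 / (INR N + 1 - m))) (fun xi => Rabs (U xi - 0)) /\
  equiv_pinfty (fun xi => Rabs (U xi - 0)) (fun xi => rpow (Rabs xi) (- (1 / (INR N - m)))).
Proof. split; [apply profile_slope_equiv_p_infty | apply profile_equiv_power_p_infty]. Qed.

End DecayAtPlusInfinity.

Lemma hfun_expansion_at_um : exists del M, 0 < del /\ 0 <= M /\
  forall u, Rabs (u - um) < del ->
    Rabs (hfun u + rpow um (1 - m) / (mu * m) * (Derive f um - s) * (um - u)) <= M * (um - u) ^ 2.
Proof.
  set (dg := Derive f um - s). set (r := fun u => rpow u (1 - m)).
  destruct (taylor1_remainder g (fun v => Derive f v - s) um (Derive (Derive f) um) is_derive_g)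
    as (del1 & K1 & Hdel1 & HK1 & Hg2).
  { auto_derive; [exact (Hf 2%nat um) | change (fun x => Derive f x) with (Derive f); simpl; ring]. }
  destruct (is_derive_loc_lipschitz r um _ (is_derive_rpow um (1 - m) Hum)) as [del3 [Hdel3 Hr]].
  set (K3 := Rabs ((1 - m) * rpow um (1 - m - 1)) + 1). fold K3 in Hr.
  assert (HK3 : 0 <= K3) by (unfold K3; generalize (Rabs_pos ((1 - m) * rpow um (1 - m - 1))); lra).
  set (del := Rmin del1 del3).
  assert (Hdel : 0 < del /\ del <= del1 /\ del <= del3)
    by (unfold del; split; [apply Rmin_pos | split; [apply Rmin_l | apply Rmin_r]]; lra).
  exists del, ((K1 * (1 + um + del) + Rabs dg * K3) / (mu * m)).
  split; [lra|]. split; [apply Rmult_le_pos; [generalize (Rabs_pos dg); nra | apply Rlt_le, Rinv_0_lt_compat, Hmm]|].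
  intros u Hu. set (w := um - u).
  assert (Hw : Rabs (u - um) = Rabs w) by (unfold w; apply Rabs_minus_sym).
  specialize (Hg2 u ltac:(lra)). specialize (Hr u ltac:(lra)).
  rewrite g_um, Rminus_0_r in Hg2. fold dg in Hg2.
  replace ((u - um) ^ 2) with (w ^ 2) in Hg2 by (unfold w; ring).
  rewrite Hw in Hr.
  assert (Hru : Rabs (r u) <= 1 + um + del).
  { unfold r. rewrite Rabs_pos_eq by apply rpow_ge0.
    eapply Rle_trans; [apply rpow_le_1_plus_abs; lra|].
    generalize (Rabs_triang (u - um) um). rewrite Rabs_pos_eq with (x := um) by lra.
    replace (u - um + um) with u by ring. lra. }
  (* [mu m (h(u) + lam w) = (g(u) + g'(um) w) r(u) - g'(um) w (r(u) - r(um))] *)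
  replace (hfun u + rpow um (1 - m) / (mu * m) * dg * w)
    with (((g u - dg * (u - um)) * r u - dg * w * (r u - r um)) / (mu * m))
    by (unfold hfun, r, w; field; lra).
  unfold Rdiv. rewrite Rabs_mult, (Rabs_pos_eq (/ (mu * m))) by (apply Rlt_le, Rinv_0_lt_compat, Hmm).
  replace ((K1 * (1 + um + del) + Rabs dg * K3) * / (mu * m) * w ^ 2)
    with ((K1 * w ^ 2 * (1 + um + del) + Rabs dg * Rabs w * (K3 * Rabs w)) * / (mu * m))
    by (rewrite <- (Rabs_pos_eq (w ^ 2)), <- RPow_abs by apply pow2_ge_0; simpl; ring).
  apply Rmult_le_compat_r; [apply Rlt_le, Rinv_0_lt_compat, Hmm|].
  eapply Rle_trans; [apply Rabs_triang|]. rewrite Rabs_Ropp, !Rabs_mult.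
  apply Rplus_le_compat.
  - apply Rmult_le_compat; auto using Rabs_pos.
  - apply Rmult_le_compat_l; [apply Rmult_le_pos; apply Rabs_pos | exact Hr].
Qed.

Definition lam : R := rpow um (1 - m) / (mu * m) * (Derive f um - s).

Section DecayAtMinusInfinity.

Variable U : R -> R.
Hypotheses (HU : is_profile f mu m s um U) (Hs : s < Derive f um).

Lemma lam_pos : 0 < lam.
Proof.
  apply Rmult_lt_0_compat; [apply Rdiv_lt_0_compat; [apply rpow_gt0, Hum | apply Rmult_lt_0_compat; auto] | lra].
Qed.

Lemma profile_linearization_m_infty : exists X M, X < 0 /\ 0 <= M /\ forall t, t <= X ->
  0 < um - U t /\ Rabs (hfun (U t) + lam * (um - U t)) <= M * (um - U t) ^ 2 /\
  Rabs (hfun (U t) + lam * (um - U t)) <= lam / 2 * (um - U t).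
Proof.
  pose proof lam_pos as Hlam.
  destruct hfun_expansion_at_um as (del & M & Hdel & HM & Hexp). fold lam in Hexp.
  set (eps := Rmin del (lam / (2 * (M + 1)))).
  assert (Heps : 0 < eps /\ eps <= del /\ M * eps <= lam / 2).
  { assert (0 < lam / (2 * (M + 1))) by (apply Rdiv_lt_0_compat; lra).
    assert (H2 : eps <= lam / (2 * (M + 1))) by apply Rmin_r.
    split; [apply Rmin_pos; lra|]. split; [apply Rmin_l|].
    apply (Rmult_le_compat_l (M + 1)) in H2; [|lra].
    replace ((M + 1) * (lam / (2 * (M + 1)))) with (lam / 2) in H2 by (field; lra). nra. }
  destruct HU as (_ & Hlm & _).
  destruct (is_lim_m_infty_elim U um Hlm eps (proj1 Heps)) as [X HX].
  exists (Rmin X 0 - 1), M. split; [generalize (Rmin_r X 0); lra|]. split; [exact HM|].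
  intros t Ht. specialize (HX t ltac:(generalize (Rmin_l X 0); lra)).
  rewrite Rabs_minus_sym in HX. pose proof (profile_lt_um U HU t).
  rewrite Rabs_pos_eq in HX by lra.
  assert (Hb : Rabs (hfun (U t) + lam * (um - U t)) <= M * (um - U t) ^ 2)
    by (apply Hexp; rewrite Rabs_minus_sym, Rabs_pos_eq; lra).
  split; [lra|]. split; [exact Hb|].
  eapply Rle_trans; [exact Hb|]. simpl. rewrite Rmult_1_r, <- Rmult_assoc.
  apply Rmult_le_compat_r; [lra|]. nra.
Qed.

Lemma profile_slope_equiv_m_infty :
  equiv_minfty (fun xi => Rabs (Derive U xi)) (fun xi => Rabs (U xi - um)).
Proof.
  pose proof lam_pos as Hlam.
  destruct profile_linearization_m_infty as (X & M & HX & HM & Hlin).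
  apply (equiv_minfty_intro _ _ X (lam / 2) (3 * lam / 2)); [lra | lra |].
  intros x Hx. destruct (Hlin x ltac:(lra)) as (Hw & _ & He).
  assert (Hh : hfun (U x) < 0)
    by (apply hfun_neg; split; [apply (profile_pos U HU) | apply (profile_lt_um U HU)]).
  rewrite (is_derive_unique _ _ _ (profile_is_derive U HU x)), (Rabs_left (hfun (U x))),
    (Rabs_left (U x - um)) by lra.
  generalize (Rle_abs (hfun (U x) + lam * (um - U x))) (Rle_abs (- (hfun (U x) + lam * (um - U x)))).
  rewrite Rabs_Ropp. lra.
Qed.

Lemma profile_equiv_exp_m_infty :
  equiv_minfty (fun xi => Rabs (U xi - um)) (fun xi => exp (- lam * Rabs xi)).
Proof.
  pose proof lam_pos as Hlam.
  destruct profile_linearization_m_infty as (X & M & HX & HM & Hlin).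
  destruct (exp_rate_m_infty (fun t => um - U t) (fun t => - (hfun (U t) + lam * (um - U t))) lam M X)
    as (c1 & c2 & Hc1 & Hc2 & Hexp); [exact Hlam | exact HM | |].
  { intros t Ht. destruct (Hlin t Ht) as (Hw & H1 & H2). rewrite Rabs_Ropp.
    split; [exact Hw|]. split; [|split; assumption].
    replace (lam * (um - U t) + - (hfun (U t) + lam * (um - U t))) with (0 - hfun (U t)) by ring.
    apply (is_derive_minus (fun _ => um) U); [auto_derive; auto | apply (profile_is_derive U HU)]. }
  apply (equiv_minfty_intro _ _ X c1 c2); [exact Hc1 | exact Hc2 |].
  intros x Hx. rewrite Rabs_left, Rabs_minus_sym by lra.
  destruct (Hlin x ltac:(lra)) as (Hw & _). rewrite Rabs_pos_eq by lra.
  replace (- lam * - x) with (lam * x) by ring.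
  split; [apply Rlt_le, exp_pos | apply Hexp; lra].
Qed.

Lemma profile_decay_m_infty : 0 < lam /\
  equiv_minfty (fun xi => Rabs (Derive U xi)) (fun xi => Rabs (U xi - um)) /\
  equiv_minfty (fun xi => Rabs (U xi - um)) (fun xi => exp (- lam * Rabs xi)).
Proof. split; [|split]; [apply lam_pos | apply profile_slope_equiv_m_infty | apply profile_equiv_exp_m_infty]. Qed.

End DecayAtMinusInfinity.

End SufficientConditions.

End TravelingWave.

Theorem theorem2p1 (m mu : R) (f : R -> R) (um s : R) :
  0 < m -> m < 1 -> 0 < mu -> smooth f -> 0 < um ->
  (* (1) necessary condition *)
  ((exists U, is_profile f mu m s um U) ->
     s = (f 0 - f um) / (0 - um) /\
     (forall u, 0 < u < um -> gfun f s um u < 0)) /\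
  (* (2) sufficient condition: existence and uniqueness up to shift *)
  ((s = (f 0 - f um) / (0 - um) ->
    (forall u, 0 < u < um -> gfun f s um u < 0) ->
     (exists U, is_profile f mu m s um U) /\
     (forall U1 U2, is_profile f mu m s um U1 -> is_profile f mu m s um U2 ->
        exists c, forall xi, U2 xi = U1 (xi + c)))) /\
  (* (3) decay properties *)
  (forall U, s = (f 0 - f um) / (0 - um) ->
     (forall u, 0 < u < um -> gfun f s um u < 0) ->
     is_profile f mu m s um U ->
     let lambda := rpow um (1 - m) / (mu * m) * (Derive f um - s) in
     (* non-degenerate case *)
     (Derive f 0 < s < Derive f um ->
        0 < lambda /\
        equiv_pinfty (fun xi => rpow (Rabs (Derive U xi)) (1 / (2 - m)))
                     (fun xi => Rabs (U xi - 0)) /\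
        equiv_pinfty (fun xi => Rabs (U xi - 0))
                     (fun xi => rpow (Rabs xi) (- (1 / (1 - m)))) /\
        equiv_minfty (fun xi => Rabs (Derive U xi)) (fun xi => Rabs (U xi - um)) /\
        equiv_minfty (fun xi => Rabs (U xi - um)) (fun xi => exp (- lambda * Rabs xi))) /\
     (* degenerate case *)
     (forall k : nat, (1 <= k)%nat ->
        Derive f 0 = s -> s < Derive f um ->
        (forall j : nat, (2 <= j <= k)%nat -> Derive_n f j 0 = 0) ->
        Derive_n f (S k) 0 <> 0 ->
        0 < lambda /\
        equiv_pinfty (fun xi => rpow (Rabs (Derive U xi)) (1 / (INR k + 2 - m)))
                     (fun xi => Rabs (U xi - 0)) /\
        equiv_pinfty (fun xi => Rabs (U xi - 0))
                     (fun xi => rpow (Rabs xi) (- (1 / (INR k + 1 - m)))) /\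
        equiv_minfty (fun xi => Rabs (Derive U xi)) (fun xi => Rabs (U xi - um)) /\
        equiv_minfty (fun xi => Rabs (U xi - um)) (fun xi => exp (- lambda * Rabs xi)))).
Proof.
  intros Hm0 Hm1 Hmu Hf Hum. split; [|split].
  - intros [U HU]. split.
    + exact (proj1 (profile_first_integral m mu f um s Hm0 Hm1 Hmu Hf Hum U HU)).
    + exact (profile_g_neg m mu f um s Hm0 Hm1 Hmu Hf Hum U HU).
  - intros HRH Hg. split.
    + destruct (Phi_inverse_exists m mu f um s) as [U HU]; auto.
      exists U. apply (Phi_inverse_is_profile m mu f um s); auto.
    + intros U1 U2 H1 H2. apply (profile_unique m mu f um s); auto.
  - intros U HRH Hg HU lambda. split.
    + intros [Hs0 Hs1].
      destruct (g_power_bounds_nondegenerate f um s) as (del & A & B & Hdel & HA & HB & Hgb); auto.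
      destruct (profile_decay_p_infty m mu f um s Hm0 Hm1 Hmu Hf Hum Hg U 1 del A B) as [Hp1 Hp2]; auto.
      destruct (profile_decay_m_infty m mu f um s Hm0 Hm1 Hmu Hf Hum Hg U HU Hs1) as (Hl & Hm1' & Hm2').
      replace (2 - m) with (INR 1 + 1 - m) by (simpl; ring).
      replace (1 - m) with (INR 1 - m) by (simpl; ring).
      repeat split; assumption.
    + intros k Hk Hs0 Hs1 Hflat Hnz.
      destruct (g_power_bounds_degenerate f um s Hf Hum HRH Hg k) as (del & A & B & Hdel & HA & HB & Hgb); auto.
      destruct (profile_decay_p_infty m mu f um s Hm0 Hm1 Hmu Hf Hum Hg U (S k) del A B) as [Hp1 Hp2]; auto.
      destruct (profile_decay_m_infty m mu f um s Hm0 Hm1 Hmu Hf Hum Hg U HU Hs1) as (Hl & Hm1' & Hm2').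
      replace (INR k + 2 - m) with (INR (S k) + 1 - m) by (rewrite S_INR; ring).
      replace (INR k + 1 - m) with (INR (S k) - m) by (rewrite S_INR; ring).
      repeat split; assumption.
Qed.
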